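(* Let $c$ be a cost function, $\alpha_i>0$, $m_i$ measures on $\mathbb{R}^n$, and let $(\Phi_1,\dots,\Phi_N)$ be an admissible tuple maximizing $\mathcal{BS}_{\alpha,m}$ over all admissible tuples, with $0<\int e^{-\alpha_i\Phi_i}dm_i<\infty$. Let $\mu_i=e^{-\alpha_i\Phi_i}m_i/\int e^{-\alpha_i\Phi_i}dm_i$ and $d(x)=\sum_{i=1}^N\Phi_i(x_i)-c(x)\ge0$. Let $\nu_1,\dots,\nu_N$ be probability measures on $\mathbb{R}^n$ such that the minimization transportation problem for the cost $d$ with marginals $\nu_i$ and its dual problem both admit solutions and their optimal values coincide. Then $$K^{\min}_d(\nu_1,\dots,\nu_N)\le\sum_{i=1}^N\frac{1}{\alpha_i}\,\mathrm{Ent}_{\mu_i}(\nu_i).$$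
   Context: Points of $(\mathbb{R}^n)^N$ are written $x=(x_1,\dots,x_N)$. A tuple $(V_i)$ of functions $V_i:\mathbb{R}^n\to(-\infty,+\infty]$ is admissible (for $c$) if $\sum_iV_i(x_i)\ge c(x)$ for all $x$; $\mathcal{BS}_{\alpha,m}(V_1,\dots,V_N)=\prod_i(\int e^{-\alpha_iV_i}dm_i)^{1/\alpha_i}$. $K^{\min}_d(\nu_1,\dots,\nu_N)=\inf_\pi\int d\,d\pi$ over probability measures $\pi$ on $(\mathbb{R}^n)^N$ with marginals $\nu_1,\dots,\nu_N$; its dual problem is to maximize $\sum_i\int f_i\,d\nu_i$ over tuples $f_i\in L^1(\nu_i)$ with $\sum_if_i(x_i)\le d(x)$ for all $x$. $\mathrm{Ent}_\mu(\nu)=\int\rho\log\rho\,d\mu$ if $\nu=\rho\mu$, and $+\infty$ if $\nu$ is not absolutely continuous w.r.t. $\mu$. *)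

From HB Require Import structures.
From mathcomp Require Import all_boot all_order all_algebra.
From mathcomp Require Import all_classical all_reals all_analysis.
From mathcomp Require Import measurable_realfun.

Set Implicit Arguments.
Unset Strict Implicit.
Unset Printing Implicit Defensive.

Import Order.TTheory GRing.Theory Num.Theory.
Local Open Scope classical_set_scope.
Local Open Scope ring_scope.

(* R^n is modelled as n.-tuple R with the product (Borel) sigma-algebra
   generated by the coordinate projections; (R^n)^N as N.-tuple (n.-tuple R). *)
Notation Rn R n := (n.-tuple R).
Notation RnN R n N := (N.-tuple (n.-tuple R)).

Section defs.
Context {R : realType} (n N : nat).
Local Open Scope ereal_scope.

Definition coord (i : 'I_N) (x : RnN R n N) : Rn R n := tnth x i.

Definition admissible (c : RnN R n N -> R) (V : 'I_N -> Rn R n -> \bar R) :=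
  (forall i, measurable_fun [set: Rn R n] (V i)) /\
  (forall i x, V i x != -oo) /\
  (forall x : RnN R n N, (c x)%:E <= \sum_(i < N) V i (coord i x)).

Definition expm (a : R) (V : Rn R n -> \bar R) (y : Rn R n) : \bar R :=
  expeR (- (a%:E * V y)).

Definition BS (alpha : 'I_N -> R)
    (m : 'I_N -> {measure set (Rn R n) -> \bar R})
    (V : 'I_N -> Rn R n -> \bar R) : \bar R :=
  \prod_(i < N) ((\int[m i]_y expm (alpha i) (V i) y) `^ ((alpha i)^-1)%R).

Definition is_coupling (nu : 'I_N -> probability (Rn R n) R)
    (pi : probability (RnN R n N) R) :=
  forall i (A : set (Rn R n)), measurable A ->
    pi (coord i @^-1` A) = nu i A.

Definition Kmin (d : RnN R n N -> \bar R) (nu : 'I_N -> probability (Rn R n) R) :=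
  ereal_inf [set \int[pi]_x d x | pi in [set pi | is_coupling nu pi]].

Definition dual_admissible (d : RnN R n N -> \bar R)
    (nu : 'I_N -> probability (Rn R n) R) (f : 'I_N -> Rn R n -> R) :=
  (forall i, (nu i).-integrable [set: Rn R n] (fun y => (f i y)%:E)) /\
  (forall x : RnN R n N, (\sum_(i < N) f i (coord i x))%:E <= d x).

Definition dual_value (nu : 'I_N -> probability (Rn R n) R)
    (f : 'I_N -> Rn R n -> R) : \bar R :=
  \sum_(i < N) \int[nu i]_y (f i y)%:E.

Definition Kdual (d : RnN R n N -> \bar R) (nu : 'I_N -> probability (Rn R n) R) :=
  ereal_sup [set dual_value nu f | f in [set f | dual_admissible d nu f]].

Definition dcost (c : RnN R n N -> R) (Phi : 'I_N -> Rn R n -> \bar R)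
    (x : RnN R n N) : \bar R :=
  \sum_(i < N) Phi i (coord i x) - (c x)%:E.

End defs.

Section entropy.
Context {d : measure_display} {T : measurableType d} {R : realType}.
Local Open Scope ereal_scope.

Definition is_density (mu nu : {measure set T -> \bar R}) (rho : T -> R) :=
  measurable_fun [set: T] rho /\ (forall x, (0 <= rho x)%R) /\
  forall A, measurable A -> nu A = \int[mu]_(x in A) (rho x)%:E.

(* Ent_mu(nu) = int rho log rho dmu if nu = rho mu, +oo if nu is not
   absolutely continuous w.r.t. mu.  All densities agree mu-a.e., so the
   infimum below is the common value; the infimum of the empty set is +oo. *)
Definition Ent (mu nu : {measure set T -> \bar R}) : \bar R :=
  ereal_inf [set \int[mu]_x (rho x * ln (rho x))%:E
            | rho in [set rho | is_density mu nu rho]].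

End entropy.

From Pilot Require Import Defs.
From HB Require Import structures.
From mathcomp Require Import all_boot all_order all_algebra.
From mathcomp Require Import all_classical all_reals all_analysis.
From mathcomp Require Import measurable_realfun.
From mathcomp Require Import lra.

(* Let f be an optimal dual tuple.  Then V_i = Phi_i - f_i is again admissible
   and e^{-alpha_i V_i} m_i = Z_i e^{alpha_i f_i} mu_i, so the maximality of Phi
   for BS gives prod_i (int e^{alpha_i f_i} dmu_i)^{1/alpha_i} <= 1.  The
   Donsker-Varadhan inequality int g dnu - log int e^g dmu <= Ent_mu(nu), applied
   to g = alpha_i f_i, therefore bounds the dual value sum_i int f_i dnu_i by
   sum_i Ent_{mu_i}(nu_i) / alpha_i, and this dual value is K^min_d since there is
   no duality gap. *)

Import Order.TTheory GRing.Theory Num.Theory.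
Local Open Scope classical_set_scope.
Local Open Scope ring_scope.

Section measure_density.
Context {d : measure_display} {T : measurableType d} {R : realType}.
Context {mu nu : {measure set T -> \bar R}} {g : T -> \bar R}.
Hypotheses (g_ge0 : forall x, (0 <= g x)%E) (g_fin : forall x, g x \is a fin_num).
Hypothesis mg : measurable_fun setT g.
Hypothesis nu_density :
  forall A, measurable A -> nu A = (\int[mu]_(x in A) g x)%E.
Local Open Scope ereal_scope.
Import HBNNSimple.

Lemma integral_density_nnsfun (h : {nnsfun T >-> R}) E : measurable E ->
  \int[mu]_(x in E) ((h x)%:E * g x) = \int[nu]_(x in E) (h x)%:E.
Proof.
move=> mE.
have h_ge0 r x : 0 <= r%:E * (\1_(h @^-1` [set r]) x)%:E.
  exact: nnfun_muleindic_ge0.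
transitivity (\int[mu]_(x in E) \sum_(r \in range h)
    (r%:E * (\1_(h @^-1` [set r]) x)%:E * g x)).
  apply: eq_integral => x _.
  by rewrite -ge0_mule_fsuml// fsumEFin// -(fimfunE _ x).
transitivity (\int[nu]_(x in E) \sum_(r \in range h)
    (r%:E * (\1_(h @^-1` [set r]) x)%:E)); last first.
  by apply: eq_integral => x _; rewrite [in RHS]fimfunE -fsumEFin.
have m_term r : measurable_fun E (fun x => r%:E * (\1_(h @^-1` [set r]) x)%:E).
  apply: emeasurable_funM; first exact: measurable_cst.
  exact/measurable_EFinP/measurable_funTS.
rewrite ge0_integral_fsum//; last 2 first.
- by move=> r; apply: emeasurable_funM => //; exact: measurable_funTS mg.
- by move=> r x _; rewrite mule_ge0.
rewrite ge0_integral_fsum//.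
apply: eq_fsbigr => r /[!inE] -[x0 _ <-{r}].
have m_indic : measurable_fun E (fun x => (\1_(h @^-1` [set h x0]) x : R)%:E).
  exact/measurable_EFinP/measurable_funTS.
under eq_integral do rewrite -muleA.
rewrite !ge0_integralZl ?lee_fin//; first last.
- by move=> x _; rewrite mule_ge0 ?lee_fin.
- by apply: emeasurable_funM => //; exact: measurable_funTS mg.
congr (_ * _); rewrite integral_indic//.
rewrite (eq_integral (g \_ (h @^-1` [set h x0]))); last first.
  by move=> x _; rewrite epatch_indic muleC.
by rewrite -integral_mkcondr -nu_density// setIC.
Qed.

Lemma ge0_integral_density f E : (forall x, 0 <= f x) ->
    measurable E -> measurable_fun E f ->
  \int[mu]_(x in E) (f x * g x) = \int[nu]_(x in E) f x.
Proof.
move=> f0 mE mf; pose h := nnsfun_approx mE mf.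
have h_cvg x : E x -> (EFin \o h n) x @[n --> \oo] --> f x.
  by move=> Ex; exact: cvg_nnsfun_approx.
have mh n : measurable_fun E (EFin \o h n).
  exact/measurable_EFinP/measurable_funTS.
have h_nd x : E x ->
    {homo (fun n => (EFin \o h n) x) : a b / (a <= b)%N >-> a <= b}.
  by move=> Ex a b ab; rewrite lee_fin; exact/lefP/nd_nnsfun_approx.
have -> : \int[nu]_(x in E) f x =
    lim (\int[nu]_(x in E) (EFin \o h n) x @[n --> \oo]).
  rewrite -monotone_convergence//; last by move=> n x _; rewrite lee_fin.
  by apply: eq_integral => x /[!inE] Ex; apply/esym/cvg_lim => //; exact: h_cvg.
have -> : \int[mu]_(x in E) (f x * g x) =
    lim (\int[mu]_(x in E) ((h n x)%:E * g x) @[n --> \oo]).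
  rewrite -monotone_convergence//; first last.
  - by move=> x Ex a b ab; rewrite lee_wpmul2r//; exact: h_nd.
  - by move=> n x _; rewrite mule_ge0 ?lee_fin.
  - by move=> n; apply: emeasurable_funM; [exact: mh|exact: measurable_funTS mg].
  apply: eq_integral => x /[!inE] Ex; apply/esym/cvg_lim => //.
  by apply: cvgeZr; [exact: g_fin|exact: h_cvg].
by congr (lim (_ @ \oo)); apply/funext => n; exact: integral_density_nnsfun.
Qed.

Lemma integral_density f E : measurable E -> measurable_fun E f ->
  \int[mu]_(x in E) (f x * g x) = \int[nu]_(x in E) f x.
Proof.
move=> mE mf; rewrite integralE [RHS]integralE.
have fg_pos x : (fun x => f x * g x)^\+ x = f^\+ x * g x.
  by rewrite !funeposE maxe_pMl// mul0e.
have fg_neg x : (fun x => f x * g x)^\- x = f^\- x * g x.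
  by rewrite !funenegE maxe_pMl// mul0e mulNe.
under eq_integral do rewrite fg_pos.
under [X in _ - X]eq_integral do rewrite fg_neg.
rewrite !ge0_integral_density//.
- exact: measurable_funeneg.
- exact: measurable_funepos.
Qed.

Lemma integrable_density f E : measurable E ->
  nu.-integrable E f -> mu.-integrable E (fun x => f x * g x).
Proof.
move=> mE /integrableP[mf fi]; apply/integrableP; split.
  by apply: emeasurable_funM => //; exact: measurable_funTS mg.
under eq_integral do rewrite abseM (gee0_abs (g_ge0 _)).
by rewrite ge0_integral_density//; exact: measurableT_comp.
Qed.

End measure_density.

Lemma le_measurable_integral {d} {T : measurableType d} {R : realType}
    (mu : {measure set T -> \bar R}) D (f g : T -> \bar R) :
  measurable D -> measurable_fun D f -> measurable_fun D g ->
  {in D, forall x, (f x <= g x)%E} ->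
  (\int[mu]_(x in D) f x <= \int[mu]_(x in D) g x)%E.
Proof.
move=> mD mf mg fg; rewrite integralE [leRHS]integralE leeB//.
- apply: ge0_le_integral => //; try exact: measurable_funepos.
  by move=> x /mem_set; exact: funepos_le.
- apply: ge0_le_integral => //; try exact: measurable_funeneg.
  by move=> x /mem_set; exact: funeneg_le.
Qed.

Lemma integral_gt0 {d} {T : measurableType d} {R : realType}
    (mu : {measure set T -> \bar R}) (h : T -> R) :
  (0 < mu setT)%E -> measurable_fun setT h -> (forall x, 0 < h x) ->
  (0 < \int[mu]_x (h x)%:E)%E.
Proof.
move=> mu_gt0 mh h_gt0.
rewrite lt_neqAle integral_ge0 ?andbT; last by move=> x _; rewrite lee_fin ltW.
apply/negP => /eqP int_h0.
pose A k := setT `&` [set x | ((k.+1%:R)^-1%:E <= `|(h x)%:E|)%E].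
have mA k : measurable (A k).
  apply: emeasurable_fun_c_infty => //.
  exact/measurableT_comp/measurable_EFinP.
have A0 k : mu (A k) = 0%E.
  have := le_integral_abse mu measurableT (proj2 (measurable_EFinP _ _) mh)
    (a := (k.+1%:R)^-1) _.
  rewrite invr_gt0 ltr0n => /(_ isT).
  have -> : (\int[mu]_x `|(EFin \o h) x| = 0)%E.
    by rewrite [RHS]int_h0; apply: eq_integral => x _; rewrite /= gtr0_norm.
  move=> muA; apply/eqP; rewrite eq_le measure_ge0 andbT.
  by rewrite -(@lee_pmul2l _ ((k.+1%:R)^-1)%:E) ?lte_fin ?invr_gt0 ?ltr0n// mule0.
have [M [mM M0 AM]] : mu.-negligible (\bigcup_k A k).
  by apply: negligible_bigcup => k; exists (A k); split => //=; exact: A0.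
suff : (mu setT <= mu M)%E by rewrite M0 leNgt mu_gt0.
apply: le_measure; rewrite ?inE//.
move=> x _; apply: AM; exists (Num.truncn ((h x)^-1)) => //.
split => //=; rewrite gtr0_norm//.
by rewrite lee_fin ltW// -invf_plt ?posrE// ?ltr0n// truncnS_gt.
Qed.

Lemma Fenchel_Young_xlnx {R : realType} (x y : R) :
  0 <= x -> x * y <= x * ln x - x + expR y.
Proof.
move=> x_ge0; have [->|x_neq0] := eqVneq x 0.
  by rewrite ln0// !mul0r subrr add0r expR_ge0.
have x_gt0 : 0 < x by rewrite lt_def x_neq0 x_ge0.
have eyE : expR y = x * expR (y - ln x).
  by rewrite expRD expRN lnK ?posrE// mulrCA divff// mulr1.
have : x * (1 + (y - ln x)) <= x * expR (y - ln x).
  by rewrite ler_pM2l// expR_ge1Dx.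
rewrite -eyE; nra.
Qed.

Section Donsker_Varadhan.
Context {d : measure_display} {T : measurableType d} {R : realType}.
Variables (mu nu : probability T R) (f : T -> R).
Hypothesis f_int : nu.-integrable setT (EFin \o f).
Hypothesis F_lty : (\int[mu]_x (expR (f x))%:E < +oo)%E.
Let F := (\int[mu]_x (expR (f x))%:E)%E.
Let L := ln (fine F).

Let mf : measurable_fun setT f.
Proof. by have /integrableP[/measurable_EFinP] := f_int. Qed.

Let mef : measurable_fun setT (fun x => expR (f x)).
Proof. exact: measurableT_comp. Qed.

Let ef_int : mu.-integrable setT (EFin \o (fun x => expR (f x))).
Proof.
apply/integrableP; split; first exact/measurable_EFinP.
by under eq_integral do rewrite /= ger0_norm ?expR_ge0//; exact: F_lty.
Qed.

Let FE : F = (expR L)%:E.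
Proof.
have mu_gt0 : (0 < mu setT)%E by rewrite probability_setT.
have F_gt0 : (0 < F)%E.
  by apply: integral_gt0 => [|//|x]; [exact: mu_gt0|exact: expR_gt0].
by rewrite lnK ?fineK ?ge0_fin_numE ?ltW// posrE fine_gt0// F_gt0 F_lty.
Qed.

Lemma Donsker_Varadhan_density rho : is_density mu nu rho ->
  (\int[nu]_x (f x)%:E - L%:E <= \int[mu]_x (rho x * ln (rho x))%:E)%E.
Proof.
move=> [mrho [rho_ge0 nu_rho]].
have [I IE] : exists I : R, (\int[nu]_x (f x)%:E = I%:E)%E.
  by exists (fine (\int[nu]_x (f x)%:E)); rewrite fineK// integrable_fin_num.
have rho1 : (\int[mu]_x (rho x)%:E = 1)%E.
  by rewrite -(probability_setT nu) nu_rho.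
have rho_int : mu.-integrable setT (EFin \o rho).
  apply/integrableP; split; first exact/measurable_EFinP.
  by under eq_integral do rewrite /= ger0_norm//; rewrite rho1 ltry.
have mErho : measurable_fun setT (EFin \o rho) by exact/measurable_EFinP.
have frho_int : mu.-integrable setT (fun x => (f x)%:E * (rho x)%:E)%E.
  exact: (@integrable_density _ _ _ _ _ (EFin \o rho) rho_ge0 (fun=> isT) mErho
    nu_rho _ _ measurableT f_int).
have frhoE : (\int[mu]_x ((f x)%:E * (rho x)%:E) = I%:E)%E.
  rewrite (@integral_density _ _ _ _ _ (EFin \o rho) rho_ge0 (fun=> isT) mErho
    nu_rho (EFin \o f) setT measurableT) ?IE//; exact/measurable_EFinP.
(* Fenchel-Young at y = f x - L, integrated against mu: the e^{f - L} term has
   integral one. *)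
pose h x := f x * rho x + (1 - L) * rho x - expR (- L) * expR (f x).
have hE : (\int[mu]_x (h x)%:E = (I - L)%:E)%E.
  rewrite (eq_integral (fun x => (f x)%:E * (rho x)%:E + (1 - L)%:E * (rho x)%:E
    - (expR (- L))%:E * (expR (f x))%:E)%E); last first.
    by move=> x _; rewrite /h EFinB EFinD !EFinM.
  rewrite integralB//; first last.
  - exact: integrableZl.
  - by apply: integrableD => //; exact: integrableZl.
  rewrite integralD//; last exact: integrableZl.
  rewrite !integralZl// frhoE rho1 -/F FE mule1 -EFinM -expRD addNr expR0.
  by rewrite -EFinD; congr EFin; lra.
rewrite IE -EFinB -hE; apply: le_measurable_integral => //.
- apply/measurable_EFinP; apply: measurable_funB; last exact: measurable_funM.
  by apply: measurable_funD; exact: measurable_funM.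
- exact/measurable_EFinP/measurable_funM/measurableT_comp.
move=> x _; rewrite lee_fin /h -expRD (addrC (- L)).
have := @Fenchel_Young_xlnx _ (rho x) (f x - L) (rho_ge0 x).
rewrite mulrBr; lra.
Qed.

Lemma Donsker_Varadhan : (\int[nu]_x (f x)%:E - L%:E <= Ent mu nu)%E.
Proof.
by apply/ereal_infP => _ [rho rho_dens <-]; exact: Donsker_Varadhan_density.
Qed.

End Donsker_Varadhan.

Lemma Donsker_Varadhan_scale {d} {T : measurableType d} {R : realType}
    (mu nu : probability T R) (f : T -> R) (a : R) : 0 < a ->
  nu.-integrable setT (EFin \o f) ->
  (\int[mu]_x (expR (a * f x))%:E < +oo)%E ->
  (\int[nu]_x (f x)%:E - (a^-1 * ln (fine (\int[mu]_x (expR (a * f x))%:E)))%:E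
    <= a^-1%:E * Ent mu nu)%E.
Proof.
move=> a_gt0 f_int F_lty.
have af_int : nu.-integrable setT (EFin \o (fun x => a * f x)).
  apply: (eq_integrable measurableT _ _ _ (integrableZl measurableT a f_int)).
  by move=> x _; rewrite /= EFinM.
have [I IE] : exists I : R, (\int[nu]_x (f x)%:E = I%:E)%E.
  by exists (fine (\int[nu]_x (f x)%:E)); rewrite fineK// integrable_fin_num.
have aIE : (\int[nu]_x (a * f x)%:E = (a * I)%:E)%E.
  under eq_integral do rewrite EFinM.
  by rewrite integralZl// IE.
have := Donsker_Varadhan mu nu _ af_int F_lty.
rewrite aIE IE -EFinB -EFinB => DV.
apply: le_trans (lee_wpmul2l _ DV); last by rewrite lee_fin invr_ge0 ltW.
by rewrite -EFinM mulrBr mulrA mulVf ?gt_eqF// mul1r.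
Qed.

Lemma prod_powRM_le_sum_ln {R : realType} {I : finType} (r z F : I -> R) :
  (forall i, 0 < z i) -> (forall i, 0 < F i) ->
  \prod_i (z i * F i) `^ r i <= \prod_i z i `^ r i ->
  \sum_i r i * ln (F i) <= 0.
Proof.
move=> z_gt0 F_gt0; under eq_bigr do rewrite powRM ?ltW//.
rewrite big_split /= ger_pMr; last by apply: prodr_gt0 => i _; exact: powR_gt0.
rewrite -expR_le1 expR_sum => le_prod.
by under eq_bigr do rewrite mulrC expRM lnK ?posrE//.
Qed.

Lemma prod_poweRM_le_lty {R : realType} {I : finType} (r z : I -> R)
    (F : I -> \bar R) :
  (forall i, 0 < r i) -> (forall i, 0 < z i) -> (forall i, 0 < F i)%E ->
  (\prod_i ((z i)%:E * F i) `^ r i <= \prod_i (z i)%:E `^ r i)%E ->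
  forall i, (F i < +oo)%E.
Proof.
move=> r_gt0 z_gt0 F_gt0 le_prod i; rewrite ltNge leye_eq; apply/negP => /eqP Fi.
move: le_prod; rewrite (bigD1 i)//= Fi mulry gtr0_sg// mul1e poweRyr ?gt_eqF//.
rewrite prodEFin gt0_mulye ?leye_eq//.
apply: (big_ind (fun x => 0 < x)%E) => // [x y|j _]; first exact: mule_gt0.
by apply: poweR_gt0; rewrite mule_gt0 ?lte_fin.
Qed.

Lemma measurable_expeR {R : realType} : measurable_fun [set: \bar R] (@expeR R).
Proof.
have -> : @expeR R = fun x => if x \is a fin_num then (expR (fine x))%:E
    else (if x == +oo%E then +oo%E else 0%E).
  by apply/funext => -[r| |].
apply: measurable_fun_ifT.
- apply: (measurable_fun_bool true); rewrite setTI.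
  have := @emeasurable_fin_num _ _ R setT id measurableT (@measurable_id _ _ setT).
  by rewrite ?setTI.
- exact/measurable_EFinP/measurableT_comp.
- apply: measurable_fun_ifT => //.
  apply: (measurable_fun_bool true); rewrite setTI.
  have -> : (fun x : \bar R => x == +oo%E) @^-1` [set true] = [set +oo%E].
    by apply/seteqP; split => x /= /eqP.
  exact: emeasurable_set1.
Qed.

Lemma expeR_shift {R : realType} (a t : R) (x : \bar R) : 0 < a -> x != -oo%E ->
  expeR (- (a%:E * (x - t%:E)))%E = ((expR (a * t))%:E * expeR (- (a%:E * x)))%E.
Proof.
move=> a_gt0; case: x => [r| |] //= _.
  by rewrite -EFinM -expRD; congr (EFin (expR _)); lra.
by rewrite mulry gtr0_sg// mul1e mule0.
Qed.

Section exponential_tilting.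
Context {d : measure_display} {T : measurableType d} {R : realType}.
Context {m : {measure set T -> \bar R}} {mu : probability T R}.
Context {a : R} {Phi : T -> \bar R}.
Hypotheses (a_gt0 : 0 < a) (mPhi : measurable_fun setT Phi).
Hypothesis Phi_nNy : forall y, Phi y != -oo%E.
Local Open Scope ereal_scope.
Let e y := expeR (- (a%:E * Phi y)).
Let Z := \int[m]_y e y.
Hypothesis Z_gt0_lty : 0 < Z < +oo.
Hypothesis mu_tilt : forall A, measurable A ->
  mu A = (fine Z)^-1%:E * \int[m]_(y in A) e y.

Lemma integral_expeR_shift (f : T -> R) : measurable_fun setT f ->
  \int[m]_y expeR (- (a%:E * (Phi y - (f y)%:E)))
    = Z * \int[mu]_y (expR (a * f y))%:E.
Proof.
move=> mf; have /andP[Z_gt0 Z_lty] := Z_gt0_lty.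
have ZE : Z = (fine Z)%:E by rewrite fineK// ge0_fin_numE// ltW.
have z_gt0 : (0 < fine Z)%R by rewrite -lte_fin -ZE.
have me : measurable_fun setT e.
  apply: measurableT_comp; first exact: measurable_expeR.
  by apply: measurableT_comp => //; exact: emeasurable_funM.
pose g y := (fine Z)^-1%:E * e y.
have g_ge0 y : 0 <= g y by rewrite mule_ge0 ?expeR_ge0// lee_fin invr_ge0 ltW.
have g_fin y : g y \is a fin_num.
  rewrite fin_numM// /e; move: (Phi_nNy y); case: (Phi y) => [r| |]//= _.
  by rewrite mulry gtr0_sg// mul1e.
have mg : measurable_fun setT g by exact: emeasurable_funM.
have mu_g A : measurable A -> mu A = \int[m]_(y in A) g y.
  move=> mA; rewrite mu_tilt// ge0_integralZl ?lee_fin ?invr_ge0 ?ltW//.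
  - exact: measurable_funS me.
  - by move=> y _; exact: expeR_ge0.
have ef_ge0 y : 0 <= (expR (a * f y))%:E by rewrite lee_fin expR_ge0.
have mef : measurable_fun setT (fun y => (expR (a * f y))%:E).
  by apply/measurable_EFinP/measurableT_comp => //; exact: measurable_funM.
rewrite -(ge0_integral_density g_ge0 g_fin mg mu_g _ _ ef_ge0 measurableT mef).
rewrite ZE -ge0_integralZl ?lee_fin ?ltW//; last 2 first.
- exact: emeasurable_funM.
- by move=> y _; rewrite mule_ge0.
apply: eq_integral => y _; rewrite expeR_shift// /g muleCA; congr (_ * _).
by rewrite muleA -EFinM divff ?gt_eqF// mul1e.
Qed.

End exponential_tilting.

(* Unqualified, [coord] is the coordinate map of vector.v. *)
Lemma admissible_sub_dual {R : realType} {n N : nat} {c : RnN R n N -> R}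
    {Phi : 'I_N -> Rn R n -> \bar R} {f : 'I_N -> Rn R n -> R} :
  admissible c Phi -> (forall i, measurable_fun setT (f i)) ->
  (forall x, (\sum_(i < N) f i (Defs.coord i x))%:E <= dcost c Phi x)%E ->
  admissible c (fun i y => Phi i y - (f i y)%:E)%E.
Proof.
move=> [mPhi [Phi_nNy _]] mf f_le_d; split; [|split].
- by move=> i; apply: emeasurable_funB => //; exact/measurable_EFinP.
- by move=> i y; move: (Phi_nNy i y); case: (Phi i y).
- move=> x; have := f_le_d x; rewrite /dcost big_split /= sumEFin sumrN !EFinN.
  by rewrite !leeBrDl// addeC.
Qed.

Section BS_maximizer.
Context {R : realType} {n N : nat} {c : RnN R n N -> R} {alpha : 'I_N -> R}.
Context {m : 'I_N -> {measure set (Rn R n) -> \bar R}}.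
Context {Phi : 'I_N -> Rn R n -> \bar R} {mu : 'I_N -> probability (Rn R n) R}.
Context {f : 'I_N -> Rn R n -> R}.
Hypothesis halpha : forall i, 0 < alpha i.
Hypothesis hPhi : admissible c Phi.
Hypothesis hmax : forall V, admissible c V -> (BS alpha m V <= BS alpha m Phi)%E.
Hypothesis hZ : forall i, (0 < \int[m i]_y expm (alpha i) (Phi i) y < +oo)%E.
Hypothesis hmu : forall i (A : set (Rn R n)), measurable A ->
  mu i A = (((fine (\int[m i]_y expm (alpha i) (Phi i) y))^-1)%:E
            * \int[m i]_(y in A) expm (alpha i) (Phi i) y)%E.
Hypothesis mf : forall i, measurable_fun setT (f i).
Hypothesis f_le_d :
  forall x, ((\sum_(i < N) f i (Defs.coord i x))%:E <= dcost c Phi x)%E.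

Let z i := fine (\int[m i]_y expm (alpha i) (Phi i) y).
Let F i := (\int[mu i]_y (expR (alpha i * f i y))%:E)%E.

Let z_gt0 i : 0 < z i.
Proof. exact: fine_gt0 (hZ i). Qed.

Let F_gt0 i : (0 < F i)%E.
Proof.
have mu_gt0 : (0 < mu i setT)%E by rewrite probability_setT.
apply: integral_gt0 => // [|y]; last exact: expR_gt0.
by apply: measurableT_comp => //; exact: measurable_funM.
Qed.

Let le_prod : (\prod_i ((z i)%:E * F i) `^ (alpha i)^-1
    <= \prod_i (z i)%:E `^ (alpha i)^-1)%E.
Proof.
have [mPhi [Phi_nNy _]] := hPhi.
have ZE i : (\int[m i]_y expm (alpha i) (Phi i) y = (z i)%:E)%E.
  by case/andP: (hZ i) => Z_gt0 Z_lty; rewrite fineK// ge0_fin_numE// ltW.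
have := hmax _ (admissible_sub_dual hPhi mf f_le_d); rewrite /BS.
under eq_bigr do rewrite (integral_expeR_shift (halpha _) (mPhi _) (Phi_nNy _)
  (hZ _) (hmu _) _ (mf _)) ZE.
by under [X in (_ <= X)%E -> _]eq_bigr do rewrite ZE.
Qed.

Lemma dual_laplace_lty i :
  (\int[mu i]_y (expR (alpha i * f i y))%:E < +oo)%E.
Proof.
have alphaV_gt0 j : 0 < (alpha j)^-1 by rewrite invr_gt0.
exact: (prod_poweRM_le_lty _ _ _ alphaV_gt0 z_gt0 F_gt0 le_prod i).
Qed.

Lemma sum_ln_dual_laplace_le0 :
  \sum_(i < N)
    (alpha i)^-1 * ln (fine (\int[mu i]_y (expR (alpha i * f i y))%:E)%E) <= 0.
Proof.
have FE i : F i = (fine (F i))%:E.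
  by rewrite fineK// ge0_fin_numE ?ltW// dual_laplace_lty.
apply: (prod_powRM_le_sum_ln _ z (fun i => fine (F i)) z_gt0) => [i|].
  by rewrite -lte_fin -FE.
rewrite -lee_fin -!prodEFin.
under eq_bigr do rewrite -poweR_EFin EFinM -FE.
by under [X in (_ <= X)%E]eq_bigr do rewrite -poweR_EFin.
Qed.

End BS_maximizer.

Theorem theorem2p3 (R : realType) (n N : nat)
  (c : RnN R n N -> R) (hc : measurable_fun [set: RnN R n N] c)
  (alpha : 'I_N -> R) (halpha : forall i, 0 < alpha i)
  (m : 'I_N -> {measure set (Rn R n) -> \bar R})
  (Phi : 'I_N -> Rn R n -> \bar R)
  (hPhi : admissible c Phi)
  (hmax : forall V, admissible c V -> (BS alpha m V <= BS alpha m Phi)%E)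
  (hZ : forall i, (0 < \int[m i]_y expm (alpha i) (Phi i) y < +oo)%E)
  (mu : 'I_N -> probability (Rn R n) R)
  (hmu : forall i (A : set (Rn R n)), measurable A ->
     mu i A = (((fine (\int[m i]_y expm (alpha i) (Phi i) y))^-1)%:E
              * \int[m i]_(y in A) expm (alpha i) (Phi i) y)%E)
  (nu : 'I_N -> probability (Rn R n) R)
  (hprimal : exists pi : probability (RnN R n N) R,
     is_coupling nu pi /\
     (\int[pi]_x dcost c Phi x)%E = Kmin (dcost c Phi) nu)
  (hdual : exists f : 'I_N -> Rn R n -> R,
     dual_admissible (dcost c Phi) nu f /\
     dual_value nu f = Kdual (dcost c Phi) nu)
  (hval : Kmin (dcost c Phi) nu = Kdual (dcost c Phi) nu) :
  (Kmin (dcost c Phi) nu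
     <= \sum_(i < N) ((alpha i)^-1)%:E * Ent (mu i) (nu i))%E.
Proof.
have [f [[f_int f_le_d] f_opt]] := hdual; rewrite hval -f_opt /dual_value.
have mf i : measurable_fun setT (f i).
  by apply/measurable_EFinP; case/integrableP: (f_int i).
have F_lty := dual_laplace_lty halpha hPhi hmax hZ hmu mf f_le_d.
have ln_F_le0 := sum_ln_dual_laplace_le0 halpha hPhi hmax hZ hmu mf f_le_d.
have DV i :=
  Donsker_Varadhan_scale (mu i) (nu i) _ _ (halpha i) (f_int i) (F_lty i).
pose I i := fine (\int[nu i]_y (f i y)%:E)%E.
have IE i : (\int[nu i]_y (f i y)%:E = (I i)%:E)%E.
  by rewrite fineK// (integrable_fin_num measurableT (f_int i)).
apply: le_trans _ (lee_sum _ (fun i _ => DV i)).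
under eq_bigr do rewrite IE.
under [X in (_ <= X)%E]eq_bigr do rewrite IE -EFinB.
by rewrite !sumEFin lee_fin sumrB; lra.
Qed.
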